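(* Let $f:X\to Y$ be a morphism of presheaves on $\mathscr{V}_f$ such that $X=X_{\le n}$ for some $n\in\mathbb{N}$. Then $f$ is a monomorphism if and only if $f:X(\mathbb{F}^n)\to Y(\mathbb{F}^n)$ is injective.
   Context: $p$ prime, $\mathbb{F}=\mathbb{F}_p$, $\mathscr{V}_f$ finite-dimensional $\mathbb{F}$-vector spaces; presheaves are contravariant functors $\mathscr{V}_f\to$ Sets. For a presheaf $X$, $X_{\le n}\subset X$ is the image of the evaluation map $X(\mathbb{F}^n)\times_{\mathrm{End}(\mathbb{F}^n)}\mathrm{Hom}(-,\mathbb{F}^n)\to X$ (the $n$-th stage of the rank filtration). *)

From mathcomp Require Import all_boot all_order all_algebra.
Set Implicit Arguments. Unset Strict Implicit. Unset Printing Implicit Defensive.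
Import GRing.Theory.
Local Open Scope ring_scope.

(* The category V_f of finite-dimensional F_p-vector spaces is replaced by its
   (equivalent) skeleton: objects are n : nat (standing for F_p^n), and a
   morphism F^m -> F^n is a matrix A : 'M['F_p]_(m, n), acting on row vectors
   (v |-> v *m A); composition of A : m -> n then B : n -> k is A *m B. *)

Record presheaf (p : nat) := Presheaf {
  pobj :> nat -> Type;
  pact : forall m n : nat, 'M['F_p]_(m, n) -> pobj n -> pobj m;
  pact_id : forall n (x : pobj n), pact 1%:M x = x;
  pact_comp : forall m n k (A : 'M['F_p]_(m, n)) (B : 'M['F_p]_(n, k)) (x : pobj k),
      pact (A *m B) x = pact A (pact B x)
}.

Record presheaf_mor (p : nat) (X Y : presheaf p) := PresheafMor {
  pmap :> forall n : nat, X n -> Y n;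
  pmap_nat : forall m n (A : 'M['F_p]_(m, n)) (x : X n),
      pmap (pact A x) = pact A (pmap x)
}.

Definition presheaf_mono (p : nat) (X Y : presheaf p) (f : presheaf_mor X Y) : Prop :=
  forall (Z : presheaf p) (g h : presheaf_mor Z X),
    (forall n (z : Z n), f n (g n z) = f n (h n z)) ->
    forall n (z : Z n), g n z = h n z.

(* y in X_{<= n}(F^m): y is in the image of the evaluation map
   X(F^n) x Hom(F^m, F^n) -> X(F^m). *)
Definition in_rank_le (p : nat) (X : presheaf p) (n m : nat) (y : X m) : Prop :=
  exists (A : 'M['F_p]_(m, n)) (x : X n), y = pact A x.

Definition rank_filtration_full (p : nat) (X : presheaf p) (n : nat) : Prop :=
  forall m (y : X m), @in_rank_le p X n m y.

(* For y in X(F^m), write y = A^* x with x in X(F^n).  A linear endomorphism E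
   of F^m of rank at most n factors through F^n, so if y1, y2 have the same
   pullbacks along all maps F^m -> F^n, then E^* y1 = E^* y2.  Choosing E with
   E A = A (so E^* y1 = y1) and E stabilising ker B, where y2 = B^* x2, gives
   y1 = (E B)^* x2; the projection Q = B B^+ then fixes both B and E B, whence
   y2 = Q^* y2 = Q^* y1 = y1.  Hence X(F^m) embeds into a product of copies of
   X(F^n), so injectivity of f on F^n gives injectivity of f everywhere, and
   componentwise injective transformations are monomorphisms; the converse
   direction is Yoneda, testing f against the representable presheaf of F^n. *)
From mathcomp Require Import all_boot all_order all_algebra.
From mathcomp Require Import zify.
Set Implicit Arguments. Unset Strict Implicit. Unset Printing Implicit Defensive.
Import GRing.Theory.
Local Open Scope ring_scope.

Section RowSpaces.
Variable F : fieldType.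

Lemma factor_mxrank_leq m k n (E : 'M[F]_(m, k)) :
  (\rank E <= n)%N -> exists (D : 'M_(m, n)) (C : 'M_(n, k)), E = D *m C.
Proof.
move=> rE; exists (col_base E *m pid_mx (\rank E)), (pid_mx (\rank E) *m row_base E).
by rewrite mulmxA -(mulmxA (col_base E)) pid_mx_id // pid_mx_1 mulmx1 mulmx_base.
Qed.

Lemma extend_to_compl m k1 k2 (K : 'M[F]_(k1, m)) (D : 'M[F]_(k2, m)) :
  (D :&: K = 0)%MS ->
  exists U : 'M_m, [/\ (D <= U)%MS, (U :&: K = 0)%MS & row_full (U + K)].
Proof.
move=> DK; set W := ((K + D)^C)%MS; exists (D + W)%MS.
have full : row_full (D + W + K).
  have := addsmx_compl_full (K + D)%MS; rewrite -!sub1mx -/W => /submx_trans; apply.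
  by rewrite -addsmxA addsmxC.
split=> //; first exact: addsmxSl.
(* rank (D + W) <= m - rank K while D + W + K is full, so the sum is direct *)
apply/eqP; rewrite -mxrank_eq0.
have rKD : \rank (K + D)%MS = (\rank K + \rank D)%N.
  by rewrite mxrank_disjoint_sum // capmxC.
have rW : \rank W = (m - \rank (K + D))%N by rewrite mxrank_compl.
have rDW : (\rank (D + W) <= \rank D + \rank W)%N := mxrank_adds_leqif D W%MS.
have := mxrank_sum_cap (D + W)%MS K; move/eqP: full => ->.
have := rank_leq_col (K + D)%MS; lia.
Qed.

Lemma exists_proj_stable m n k (A : 'M[F]_(m, n)) (V : 'M[F]_(k, m)) :
  exists E : 'M_m, [/\ (\rank E <= \rank A)%N, E *m A = A & stablemx V E].
Proof.
set K := kermx A.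
have [U [VU UK fullUK]] := extend_to_compl (capmx_diff V K).
exists (proj_mx U K); split.
- have := mxrankS (proj_mx_sub U K (1%:M : 'M_m)); rewrite mul1mx => /leq_trans; apply.
  have := mxrank_disjoint_sum UK; move/eqP: fullUK => ->.
  have := mxrank_ker A; have := rank_leq_row A; rewrite -/K; lia.
- have : ((1%:M : 'M_m) - 1%:M *m proj_mx U K <= K)%MS.
    by apply: proj_mx_compl_sub; rewrite sub1mx.
  move/sub_kermxP; rewrite mul1mx mulmxBl mul1mx => /eqP.
  by rewrite subr_eq0 => /eqP.
- rewrite -{1}(eqmxMr _ (addsmx_diff_cap_eq V K)) addsmxMr.
  by rewrite proj_mx_id ?proj_mx_0 ?capmxSr // addsmx_sub diffmxSl sub0mx.
Qed.

Lemma mulmx_fixed_stable_ker m n (Q E : 'M[F]_m) (B : 'M[F]_(m, n)) :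
  Q *m B = B -> stablemx (kermx B) E -> Q *m (E *m B) = E *m B.
Proof.
move=> QB /sub_kermxP kerBE0.
have /submxP [Z QZ] : (Q - 1%:M <= kermx B)%MS.
  by apply/sub_kermxP; rewrite mulmxBl mul1mx QB subrr.
apply/eqP; rewrite -subr_eq0 -{2}[E *m B]mul1mx -mulmxBl QZ -mulmxA.
by rewrite (mulmxA (kermx B)) kerBE0 mulmx0.
Qed.

End RowSpaces.

Section RankFiltration.
Variables (p : nat) (X : presheaf p).

Lemma pact_fixed m k (E : 'M['F_p]_m) (A : 'M['F_p]_(m, k)) (x : X k) :
  E *m A = A -> pact E (pact A x) = pact A x.
Proof. by move=> EA; rewrite -pact_comp EA. Qed.

Lemma pact_rank_leq_eq n m (y1 y2 : X m) (E : 'M['F_p]_m) :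
  (forall C : 'M['F_p]_(n, m), pact C y1 = pact C y2) ->
  (\rank E <= n)%N -> pact E y1 = pact E y2.
Proof.
move=> sep /factor_mxrank_leq [D [C ->]].
by rewrite !pact_comp sep.
Qed.

Lemma rank_filtration_separated n (hX : rank_filtration_full X n) m (y1 y2 : X m) :
  (forall C : 'M['F_p]_(n, m), pact C y1 = pact C y2) -> y1 = y2.
Proof.
move=> sep.
have [A [x1 y1E]] := hX m y1; have [B [x2 y2E]] := hX m y2.
have [E [rE EA stabE]] := exists_proj_stable A (kermx B).
have rEn : (\rank E <= n)%N := leq_trans rE (rank_leq_col A).
have y1EB : y1 = pact (E *m B) x2.
  by rewrite y1E -(pact_fixed x1 EA) -y1E (pact_rank_leq_eq sep rEn) y2E pact_comp.
set Q := B *m pinvmx B.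
have QB : Q *m B = B by rewrite mulmxKpV.
have rQ : (\rank Q <= n)%N := leq_trans (mxrankM_maxl _ _) (rank_leq_col B).
rewrite y2E -(pact_fixed x2 QB) -y2E -(pact_rank_leq_eq sep rQ) y1EB.
by rewrite -pact_comp (mulmx_fixed_stable_ker QB stabE).
Qed.

End RankFiltration.

Definition representable (p n : nat) : presheaf p :=
  @Presheaf p (fun m => 'M['F_p]_(m, n)) (fun m k A B => A *m B)
    (fun k B => mul1mx B) (fun a b c A B C => esym (mulmxA A B C)).

Definition yoneda_mor (p n : nat) (X : presheaf p) (x : X n) :
  presheaf_mor (representable p n) X :=
  @PresheafMor p (representable p n) X (fun k (B : 'M['F_p]_(k, n)) => pact B x)
    (fun m k A B => pact_comp A B x).

Lemma presheaf_mono_inj (p n : nat) (X Y : presheaf p) (f : presheaf_mor X Y) :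
  presheaf_mono f -> injective (f n).
Proof.
move=> mono x1 x2 fx.
have := mono _ (yoneda_mor x1) (yoneda_mor x2) _ n 1%:M; rewrite /= !pact_id; apply.
by move=> k B /=; rewrite !pmap_nat fx.
Qed.

Theorem corollary5p6 (p : nat) (p_prime : prime p) (X Y : presheaf p)
    (f : presheaf_mor X Y) (n : nat) :
  @rank_filtration_full p X n ->
  (@presheaf_mono p X Y f <-> injective (f n)).
Proof.
move=> hX; split; first exact: presheaf_mono_inj.
move=> inj Z g h fgh m z; apply: (rank_filtration_separated hX) => C.
by apply: inj; rewrite !pmap_nat fgh.
Qed.
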